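(* For any prime $p>3$, $$\sum_{k=1}^{p-1}\frac{\binom{2k}{k}}{k3^k}\equiv\frac{3^{p-1}-1}{p}\pmod p.$$
   Context: Congruences between rational numbers whose denominators are coprime to $p$ are understood in the ring of rationals with denominators prime to $p$ (i.e. $p$-adic integers). *)

From mathcomp Require Import all_boot all_order all_algebra.
Set Implicit Arguments. Unset Strict Implicit. Unset Printing Implicit Defensive.
Import Order.TTheory GRing.Theory Num.Theory.
Local Open Scope ring_scope.

(* Congruence of rationals modulo a prime p, in Z_(p) (rationals with
   denominator prime to p): x = y (mod p) iff x - y = a/b with p | a, p \nmid b.
   Since numq/denq are coprime, this is exactly p | numq (x - y). *)
Definition rat_congr (p : nat) (x y : rat) : Prop :=
  (p%:Z %| numq (x - y))%Z.

From HB Require Import structures.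
From mathcomp Require Import all_boot all_order all_algebra.
From mathcomp Require Import ring lra zify.
Set Implicit Arguments. Unset Strict Implicit. Unset Printing Implicit Defensive.
Import Order.TTheory GRing.Theory Num.Theory.
Local Open Scope ring_scope.

(* Let U_n and V_n be the Lucas sequences attached to x^2 - 3x + 3, whose
   roots are sqrt 3 * exp (+- i pi / 6); hence V_(n+6) = -27 V_n and, for a
   prime p = 2h + 1 > 3, V_p = s 3^(h+1) with s = +-1.  Expanding V_p
   binomially gives V_p - 3^p = p X_p with
   X_p = sum_(0<k<p) (-1)^k C(p-1-k, k-1) 3^(p-k) / k, and
   C(p-1-k, k-1) = (-1)^(k-1) C(2k-1, k-1) (mod p) turns X_p into
   -3/2 times the sum of the statement.  Reducing p X_p = s 3^(h+1) - 3^p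
   mod p gives 3^h = s (mod p), so that the factorisation
   3^(p-1) - 1 = (3^h - s)(3^h + s) yields
   (3^(p-1) - 1)/p = -X_p (3^h + s) / 3^(h+1) = -2/3 X_p (mod p). *)

Lemma denq_frac_dvd (a b : int) : (`|denq (a%:~R / b%:~R)| %| `|b|)%N.
Proof.
rewrite -(fracqE (a, b)) den_fracq /=; case: eqP => [->|_]; first exact: dvdn0.
exact/dvdn_div/dvdn_gcdr.
Qed.

Lemma ratD_num_den (x y : rat) :
  x + y = (numq x * denq y + numq y * denq x)%:~R / (denq x * denq y)%:~R.
Proof.
rewrite rmorphD !rmorphM /= -{1}[x]divq_num_den -{1}[y]divq_num_den.
by field; rewrite !intr_eq0 !denq_neq0.
Qed.

Lemma ratM_num_den (x y : rat) :
  x * y = (numq x * numq y)%:~R / (denq x * denq y)%:~R.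
Proof. by rewrite !rmorphM /= -mulf_div !divq_num_den. Qed.

(* Coprimality, rather than p not dividing the denominator, makes this a
   subring for every p; the two agree when p is prime. *)
Definition p_integral (p : nat) : {pred rat} := [pred x : rat | coprime `|denq x| p].

Lemma p_integral_frac p (a b : int) : coprime `|b| p -> a%:~R / b%:~R \in p_integral p.
Proof. exact/coprime_dvdl/denq_frac_dvd. Qed.

Lemma p_integral_natfrac p m n : coprime n p -> m%:R / n%:R \in p_integral p.
Proof. exact: (p_integral_frac m (b := n)). Qed.

Lemma p_integralV_nat p n : coprime n p -> n%:R^-1 \in p_integral p.
Proof. by rewrite -div1r; exact: (p_integral_natfrac 1). Qed.

Lemma p_integralVX_nat p b n : coprime b p -> (b%:R ^+ n)^-1 \in p_integral p.
Proof. by move=> cbp; rewrite -natrX p_integralV_nat // coprimeXl. Qed.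

Lemma p_integral_denM p x y : x \in p_integral p -> y \in p_integral p ->
  coprime `|denq x * denq y| p.
Proof. by rewrite !inE abszM coprimeMl => -> ->. Qed.

Fact p_integral_subring p : subring_closed (p_integral p).
Proof.
split=> [|x y xp yp|x y xp yp]; first by rewrite inE (denq_int 1) coprime1n.
  by rewrite ratD_num_den p_integral_frac // p_integral_denM // inE denqN.
by rewrite ratM_num_den p_integral_frac // p_integral_denM.
Qed.

HB.instance Definition _ p :=
  GRing.isSubringClosed.Build rat (p_integral p) (p_integral_subring p).

Lemma p_integral_sum_nat p m n (f : nat -> rat) :
  (forall k, (m <= k < n)%N -> f k \in p_integral p) ->
  \sum_(m <= k < n) f k \in p_integral p.
Proof.
move=> fp; rewrite big_seq_cond; apply: rpred_sum => k.
by case/andP=> /[!mem_index_iota] /fp.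
Qed.

Lemma prime_coprime_lt p k : prime p -> (0 < k < p)%N -> coprime k p.
Proof. by move=> pp /andP[k_gt0 ltkp]; rewrite coprime_sym prime_coprime // gtnNdvd. Qed.

(* In characteristic p, the library map ratr (numq x / denq x) is the
   reduction mod p, and is a ring morphism only on p-integral rationals. *)
Section ReductionModp.
Variables (F : fieldType) (p : nat).
Hypothesis pcharF : p \in [pchar F].

Lemma intr_coprime_neq0 (b : int) : coprime `|b| p -> b%:~R != 0 :> F.
Proof.
by rewrite coprime_sym prime_coprime ?(pcharf_prime pcharF) // -(dvdz_pcharf pcharF).
Qed.

Lemma ratr_frac (a b : int) :
  coprime `|b| p -> ratr (a%:~R / b%:~R) = a%:~R / b%:~R :> F.
Proof.
move=> cbp; have b_neq0 := intr_coprime_neq0 cbp.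
set x := _ / _; have dx_neq0 := intr_coprime_neq0 (p_integral_frac a cbp).
have numx : numq x * b = a * denq x.
  apply/eqP; rewrite -(eqr_int rat) !intrM numqE /x.
  by apply/eqP; field; rewrite intr_eq0; apply: contraNneq b_neq0 => ->.
by apply/eqP; rewrite /ratr eqr_div // -!intrM numx.
Qed.

Lemma ratr_natfrac m n : coprime n p -> ratr (m%:R / n%:R) = m%:R / n%:R :> F.
Proof. exact: (ratr_frac m (b := n)). Qed.

Lemma ratrV_nat n : coprime n p -> ratr n%:R^-1 = n%:R^-1 :> F.
Proof. by move=> cnp; rewrite -div1r (ratr_natfrac 1 cnp) div1r. Qed.

Lemma ratrVX_nat b n : coprime b p -> ratr ((b%:R ^+ n)^-1) = (b%:R ^+ n)^-1 :> F.
Proof. by move=> cbp; rewrite -!natrX ratrV_nat // coprimeXl. Qed.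

Lemma ratrN x : ratr (- x) = - ratr x :> F.
Proof. by rewrite /ratr numqN denqN intrN mulNr. Qed.

Lemma ratrD_integral : {in p_integral p &, {morph @ratr F : x y / x + y}}.
Proof.
move=> x y xp yp; rewrite [x + y]ratD_num_den ratr_frac ?p_integral_denM //.
by rewrite /ratr rmorphD !rmorphM /=; field; rewrite !intr_coprime_neq0.
Qed.

Lemma ratrM_integral : {in p_integral p &, {morph @ratr F : x y / x * y}}.
Proof.
move=> x y xp yp; rewrite [x * y]ratM_num_den ratr_frac ?p_integral_denM //.
by rewrite /ratr !rmorphM /= mulf_div.
Qed.

Lemma ratrX_integral n : {in p_integral p, {morph @ratr F : x / x ^+ n}}.
Proof.
move=> x xp; elim: n => [|n IHn]; first by rewrite !expr0 (ratr_nat _ 1).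
by rewrite !exprS ratrM_integral ?rpredX // IHn.
Qed.

Lemma ratr_sign n : ratr ((-1) ^+ n) = (-1) ^+ n :> F.
Proof. by rewrite ratrX_integral ?rpredN1 // ratrN (ratr_nat _ 1). Qed.

Lemma ratr_sum_nat m n (f : nat -> rat) :
  (forall k, (m <= k < n)%N -> f k \in p_integral p) ->
  ratr (\sum_(m <= k < n) f k) = \sum_(m <= k < n) ratr (f k) :> F.
Proof.
move=> fp; rewrite big_seq_cond [RHS]big_seq_cond.
apply: (big_morph_in (p_integral p)) => [||||k /andP[/[!mem_index_iota] /fp //]].
- exact: rpredD.
- exact: rpred0.
- exact: ratrD_integral.
- exact: (ratr_nat _ 0).
Qed.

Lemma ratr_rat_congr x y : x \in p_integral p -> y \in p_integral p ->
  ratr x = ratr y :> F -> rat_congr p x y.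
Proof.
move=> xp yp exy; have xyp : x - y \in p_integral p by rewrite rpredB.
have : ratr (x - y) == 0 :> F by rewrite ratrD_integral ?rpredN // ratrN exy subrr.
rewrite /ratr mulf_eq0 invr_eq0 (negPf (intr_coprime_neq0 xyp)) orbF.
by rewrite /rat_congr (dvdz_pcharf pcharF).
Qed.

Lemma bin_negate_pcharf a b : (a < p)%N -> (b < p)%N ->
  'C(p.-1 - a, b)%:R = (-1) ^+ b * 'C(a + b, b)%:R :> F.
Proof.
move=> ltap; elim: b => [|b IHb] ltbp; first by rewrite !bin0 expr0 mul1r.
have b1_neq0 : b.+1%:R != 0 :> F by rewrite -(dvdn_pcharf pcharF) gtnNdvd.
apply: (mulfI b1_neq0); rewrite -natrM mul_bin_left.
have -> : ((p.-1 - a - b) * 'C(p.-1 - a, b))%:R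
          = - (a + b).+1%:R * 'C(p.-1 - a, b)%:R :> F.
  have [lebN | ltNb] := leqP b (p.-1 - a); last by rewrite bin_small ?muln0 ?mulr0.
  have sum_p : (p.-1 - a - b + (a + b).+1 = p)%N.
    by have := prime_gt0 (pcharf_prime pcharF); lia.
  rewrite natrM; congr (_ * _); apply/eqP.
  by rewrite -subr_eq0 opprK -natrD sum_p (pcharf0 pcharF).
rewrite IHb 1?ltnW // mulrCA mulNr -natrM mul_bin_diag -addnS natrM exprS.
ring.
Qed.

End ReductionModp.

Lemma binS_central k : 'C(2 * k.+1, k.+1) = 2 * 'C(k.+1 + k, k).
Proof.
rewrite mul2n -addnn addnS binS -[X in ('C(_, X) + _)%N](addnK k k.+1).
by rewrite bin_sub ?leq_addl // addnn -mul2n.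
Qed.

Section ThreeThreeRecurrence.
Variables (R : comRingType) (u : nat -> R).
Hypothesis u_rec : forall n, u n.+2 = 3 * u n.+1 - 3 * u n.

Lemma rec33_addn6 n : u (n + 6) = -27 * u n.
Proof. by rewrite !addnS addn0 !u_rec; ring. Qed.

Lemma rec33_muln6 j r : u (6 * j + r) = (-27) ^+ j * u r.
Proof.
elim: j => [|j IHj]; first by rewrite mul1r.
by rewrite mulnS -addnA addnC rec33_addn6 IHj exprS mulrA.
Qed.

End ThreeThreeRecurrence.

(* lucasU n is the Lucas sequence U_(n+1)(3, 3), so that
   lucasU n - 3 lucasU (n - 2) is V_n(3, 3) for n >= 2; lucas_quot n is
   (V_n - 3^n) / n. *)
Definition lucasU_term (n k : nat) : rat := (-1) ^+ k * 'C(n - k, k)%:R * 3 ^+ (n - k).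

Definition lucasU (n : nat) : rat := \sum_(k < n.+1) lucasU_term n k.

Definition lucas_quot_term (n k : nat) : rat :=
  (-1) ^+ k * 'C(n.-1 - k, k.-1)%:R / k%:R * 3 ^+ (n - k).

Definition lucas_quot (n : nat) : rat := \sum_(1 <= k < n) lucas_quot_term n k.

Definition central_term (k : nat) : rat := 'C(2 * k, k)%:R / (k%:R * 3 ^+ k).

Definition central_sum (n : nat) : rat := \sum_(1 <= k < n) central_term k.

Lemma lucasU_term_small n k : (n < k + k)%N -> lucasU_term n k = 0.
Proof. by move=> ltn2k; rewrite /lucasU_term bin_small ?mulr0 ?mul0r //; lia. Qed.

Lemma lucasU_widen n d : lucasU n = \sum_(k < n.+1 + d) lucasU_term n k.
Proof.
elim: d => [|d IHd]; first by rewrite addn0.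
by rewrite addnS big_ord_recr /= lucasU_term_small ?addr0 //; lia.
Qed.

Lemma lucasU_term_rec n k :
  lucasU_term n.+2 k.+1 = 3 * lucasU_term n.+1 k.+1 - 3 * lucasU_term n k.
Proof.
rewrite /lucasU_term !subSS.
have [lekn | ltnk] := leqP k n.
  rewrite (subSn lekn) binS natrD (exprS 3 (n - k)) (exprS (-1) k).
  move: (3 ^+ (n - k)) ((-1) ^+ k) ('C(n - k, k.+1)%:R) ('C(n - k, k)%:R) => a b c d.
  ring.
have [lt1 lt2 lt3] : [/\ n.+1 - k < k.+1, n - k < k.+1 & n - k < k]%N by split; lia.
by rewrite (bin_small lt1) (bin_small lt2) (bin_small lt3) !mulr0 !mul0r subr0.
Qed.

Lemma lucasU_rec n : lucasU n.+2 = 3 * lucasU n.+1 - 3 * lucasU n.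
Proof.
rewrite (lucasU_widen n 1) (lucasU_widen n.+1 1) !addn1 /lucasU.
rewrite [in LHS]big_ord_recl [in X in _ = 3 * X - _]big_ord_recl.
under eq_bigr do rewrite lucasU_term_rec.
rewrite sumrB -!mulr_sumr mulrDr addrA; congr (_ + _ - _).
by rewrite /lucasU_term !subn0 !bin0 !expr0 !mul1r exprS.
Qed.

Lemma lucasU0 : lucasU 0 = 1.
Proof. by rewrite /lucasU big_ord1 /lucasU_term expr0 !mul1r. Qed.

Lemma lucasU1 : lucasU 1 = 3.
Proof.
rewrite /lucasU !big_ord_recr big_ord0 /lucasU_term /= subn0 subnn bin0 bin0n.
by rewrite expr0 !expr1 !mul1r mulr0 mul0r addr0 add0r.
Qed.

Lemma lucasU3 : lucasU 3 = 9.
Proof. by rewrite !lucasU_rec lucasU1 lucasU0; lra. Qed.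

Lemma lucasU5 : lucasU 5 = 0.
Proof. by rewrite !lucasU_rec lucasU1 lucasU0; lra. Qed.

Lemma exprN27 j : (-27 : rat) ^+ j = (-1) ^+ j * 3 ^+ (3 * j).
Proof. by rewrite exprM -exprMn; congr (_ ^+ _); rewrite !exprS expr0; lra. Qed.

Lemma lucasV_sign n : coprime n 6 -> (1 < n)%N ->
  exists e, lucasU n - 3 * lucasU (n - 2) = (-1) ^+ e * 3 ^+ (n./2).+1.
Proof.
rewrite (_ : 6 = 2 * 3)%N // coprimeMr !(coprime_sym n) !prime_coprime //.
move=> /andP[n2 n3] gt1n.
have [j [nE|nE]] : exists j, n = (6 * j + 1)%N \/ n = (6 * j + 5)%N.
  by exists (n %/ 6)%N; lia.
all: rewrite nE in gt1n *.
- exists j; rewrite (_ : 6 * j + 1 - 2 = 6 * j.-1 + 5)%N; last by lia.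
  rewrite !(rec33_muln6 lucasU_rec) lucasU1 lucasU5.
  rewrite (_ : (6 * j + 1)./2.+1 = (3 * j).+1)%N; last by lia.
  by rewrite mulr0 mulr0 subr0 exprN27 exprS mulrCA mulrC.
- exists j.+1; rewrite (_ : 6 * j + 5 - 2 = 6 * j + 3)%N; last by lia.
  rewrite !(rec33_muln6 lucasU_rec) lucasU3 lucasU5.
  rewrite (_ : (6 * j + 5)./2.+1 = 3 * j.+1)%N; last by lia.
  by rewrite mulr0 sub0r exprN27 mulnS exprD exprS; lra.
Qed.

Lemma lucasV_quot n :
  lucasU n.+2 - 3 * lucasU n = 3 ^+ n.+2 + n.+2%:R * lucas_quot n.+2.
Proof.
rewrite /lucasU big_ord_recl big_ord_recr /= /bump /=.
rewrite (@lucasU_term_small n.+2 (1 + n.+1)); last by lia.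
rewrite addr0 {1}/lucasU_term subn0 bin0 expr0 !mul1r -addrA; congr (_ + _).
rewrite /lucas_quot big_add1 /= big_mkord !mulr_sumr -sumrB.
apply: eq_bigr => i _; have lein : (i <= n)%N by rewrite -ltnS.
rewrite /lucasU_term /lucas_quot_term /= !subSS (subSn lein).
have binS_div : 'C((n - i).+1, i.+1)%:R
                = (n - i).+1%:R * 'C(n - i, i)%:R / i.+1%:R :> rat.
  apply: (@mulIf _ i.+1%:R); first by rewrite pnatr_eq0.
  by rewrite divfK ?pnatr_eq0 // -!natrM mulnC -mul_bin_diag.
rewrite binS_div add1n (exprS 3 (n - i)) (exprS (-1) i) -!natr1 natrB //.
have i1_neq0 : i%:R + 1 != 0 :> rat by rewrite natr1 pnatr_eq0.
move: (3 ^+ (n - i)) ((-1) ^+ i) ('C(n - i, i)%:R) i1_neq0 => a b c i1_neq0.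
by field.
Qed.

Lemma lucas_quot_sign n : coprime n 6 -> (1 < n)%N ->
  exists e, n%:R * lucas_quot n = (-1) ^+ e * 3 ^+ (n./2).+1 - 3 ^+ n.
Proof.
case: n => [|[|n]] // cn6 _; have [e he] := lucasV_sign cn6 (isT : 1 < n.+2)%N.
by exists e; rewrite -he subn2 /= lucasV_quot addrC addKr.
Qed.

Lemma prime_gt3_coprime6 p : prime p -> (3 < p)%N -> coprime p 6.
Proof.
move=> pp gt3p; rewrite coprime_sym (_ : 6 = 2 * 3)%N // coprimeMl !prime_coprime //.
by rewrite !dvdn_prime2 //; apply/andP; split; apply/eqP; lia.
Qed.

Lemma coprime3_prime p : prime p -> p != 3 -> coprime 3 p.
Proof. by move=> pp p_neq3; rewrite prime_coprime // dvdn_prime2 // eq_sym. Qed.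

Lemma lucas_quot_term_integral p n k : prime p -> (0 < k < p)%N ->
  lucas_quot_term n k \in p_integral p.
Proof.
move=> pp /(prime_coprime_lt pp) ckp.
by rewrite !rpredM ?rpred_sign ?rpredX ?rpred_nat ?p_integralV_nat.
Qed.

Lemma central_term_integral p k : prime p -> p != 3 -> (0 < k < p)%N ->
  central_term k \in p_integral p.
Proof.
move=> pp p_neq3 /(prime_coprime_lt pp) ckp.
rewrite /central_term -natrX -natrM p_integral_natfrac //.
by rewrite coprimeMl ckp coprimeXl // coprime3_prime.
Qed.

Lemma lucas_quot_integral p : prime p -> lucas_quot p \in p_integral p.
Proof. by move=> pp; apply/p_integral_sum_nat => k; exact: lucas_quot_term_integral. Qed.

Lemma central_sum_integral p : prime p -> p != 3 -> central_sum p \in p_integral p.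
Proof. by move=> pp p_neq3; apply/p_integral_sum_nat => k; exact: central_term_integral. Qed.

Lemma lucas_quot_term_pchar (F : fieldType) p k : p \in [pchar F] -> p != 3 ->
  (0 < k < p)%N -> ratr (lucas_quot_term p k) * 2 = -3 * ratr (central_term k) :> F.
Proof.
move=> pcharF p_neq3 kp; have pp := pcharf_prime pcharF.
have ckp := prime_coprime_lt pp kp; have c3p := coprime3_prime pp p_neq3.
rewrite /central_term -[3 ^+ k]natrX -natrM (ratr_natfrac pcharF); last first.
  by rewrite coprimeMl ckp coprimeXl.
rewrite natrM natrX /lucas_quot_term !(ratrM_integral pcharF);
  rewrite ?rpredM ?rpred_sign ?rpredX ?rpred_nat ?p_integralV_nat //.
rewrite (ratr_sign pcharF) ratr_nat (ratrV_nat pcharF) // (ratrX_integral pcharF) ?rpred_nat //.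
rewrite ratr_nat; have k_neq0 : k%:R != 0 :> F := intr_coprime_neq0 pcharF (b := k) ckp.
have pow3_neq0 : 3 ^+ k != 0 :> F by rewrite expf_neq0 // (intr_coprime_neq0 pcharF (b := 3)).
have -> : 3 ^+ (p - k) = 3 / 3 ^+ k :> F.
  apply: (mulIf pow3_neq0); rewrite divfK // -exprD subnK; last by case/andP: kp => _ /ltnW.
  by rewrite -(pFrobenius_autE pcharF) pFrobenius_aut_nat.
case: k kp {ckp} k_neq0 pow3_neq0 => // m /andP[_ ltmp] m1_neq0 pow3_neq0.
rewrite bin_negate_pcharf // 1?ltnW // binS_central natrM /=.
rewrite (mulrA ((-1) ^+ m.+1)) -exprD addSn exprS addnn -signr_odd odd_double expr0 mulr1.
by field; rewrite pow3_neq0 addrC natr1.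
Qed.

Lemma ratr_lucas_quot (F : fieldType) p : p \in [pchar F] -> p != 3 ->
  ratr (lucas_quot p) * 2 = -3 * ratr (central_sum p) :> F.
Proof.
move=> pcharF p_neq3; have pp := pcharf_prime pcharF.
rewrite !(ratr_sum_nat pcharF).
- by rewrite mulr_suml mulr_sumr; apply: eq_big_nat => k; exact: lucas_quot_term_pchar.
- by move=> k; exact: central_term_integral.
- by move=> k; exact: lucas_quot_term_integral.
Qed.

Lemma fermat_quot_factor (F : fieldType) (b x : F) (n h e : nat) :
  n = h.*2.+1 -> n%:R != 0 :> F -> b != 0 ->
  n%:R * x = (-1) ^+ e * b ^+ h.+1 - b ^+ n ->
  (b ^+ (n - 1) - 1) / n%:R = - x * (b ^+ h + (-1) ^+ e) / b ^+ h.+1.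
Proof.
move=> nh n_neq0 b_neq0 nx; have -> : x = ((-1) ^+ e * b ^+ h.+1 - b ^+ n) / n%:R.
  by rewrite -nx mulrC mulKf.
have bn : b ^+ n = b * (b ^+ h) ^+ 2 by rewrite nh exprS -mul2n mulnC exprM.
have bn1 : b ^+ (n - 1) = (b ^+ h) ^+ 2 by rewrite nh subn1 -mul2n mulnC exprM.
have bh_neq0 : b ^+ h != 0 by rewrite expf_neq0.
rewrite bn bn1 (exprS b h) -signr_odd.
by case: (odd e); rewrite ?expr0 ?expr1; field; rewrite n_neq0 b_neq0 bh_neq0.
Qed.

Section FermatQuotient.
Variables (p h e : nat).
Hypotheses (pp : prime p) (p_neq3 : p != 3) (ph : p = h.*2.+1).
Hypothesis pX : p%:R * lucas_quot p = (-1) ^+ e * 3 ^+ h.+1 - 3 ^+ p.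

Lemma fermat_quot_lucas :
  (3 ^+ (p - 1) - 1) / p%:R = - lucas_quot p * (3 ^+ h + (-1) ^+ e) / 3 ^+ h.+1 :> rat.
Proof. by apply: fermat_quot_factor ph _ _ pX; rewrite ?pnatr_eq0 -?lt0n ?prime_gt0. Qed.

Lemma fermat_quot_integral : ((3 ^+ (p - 1) - 1) / p%:R : rat) \in p_integral p.
Proof.
have c3p := coprime3_prime pp p_neq3.
by rewrite fermat_quot_lucas !rpredM ?rpredN ?rpredD ?rpred_sign ?rpredX ?rpred_nat
  ?lucas_quot_integral ?p_integralVX_nat.
Qed.

Variables (F : fieldType) (pcharF : p \in [pchar F]).

Lemma three_neq0_pchar : 3 != 0 :> F.
Proof. exact: (intr_coprime_neq0 pcharF (b := 3) (coprime3_prime pp p_neq3)). Qed.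

Lemma pow3_half_pchar : 3 ^+ h = (-1) ^+ e :> F.
Proof.
have := congr1 (@ratr F) pX.
rewrite (ratrM_integral pcharF) ?rpred_nat ?lucas_quot_integral // ratr_nat.
rewrite (pcharf0 pcharF) mul0r (ratrD_integral pcharF);
  rewrite ?rpredN ?rpredM ?rpred_sign ?rpredX ?rpred_nat //.
rewrite ratrN (ratrM_integral pcharF) ?rpred_sign ?rpredX ?rpred_nat //.
rewrite (ratr_sign pcharF) !(ratrX_integral pcharF) ?rpred_nat // ratr_nat.
rewrite -(pFrobenius_autE pcharF) pFrobenius_aut_nat => /eqP.
rewrite eq_sym subr_eq0 exprS mulrCA -[X in _ == X]mulr1.
rewrite (inj_eq (mulfI three_neq0_pchar)) => /eqP s3h.
by apply: (mulfI (negbT (signr_eq0 _ e))); rewrite s3h -expr2 sqrr_sign.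
Qed.

Lemma ratr_fermat_quot :
  ratr ((3 ^+ (p - 1) - 1) / p%:R) * 3 = - (ratr (lucas_quot p) * 2) :> F.
Proof.
have c3p := coprime3_prime pp p_neq3.
rewrite fermat_quot_lucas !(ratrM_integral pcharF);
  rewrite ?rpredM ?rpredN ?rpredD ?rpred_sign ?rpredX ?rpred_nat ?lucas_quot_integral
          ?p_integralVX_nat //.
rewrite ratrN (ratrD_integral pcharF) ?rpred_sign ?rpredX ?rpred_nat //.
rewrite (ratr_sign pcharF) (ratrX_integral pcharF) ?rpred_nat // ratr_nat.
rewrite (ratrVX_nat pcharF) // exprS pow3_half_pchar.
by field; rewrite signr_eq0 three_neq0_pchar.
Qed.

End FermatQuotient.

Theorem lemma2p4 (p : nat) (hp : prime p) (hp3 : (3 < p)%N) :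
  rat_congr p
    (\sum_(1 <= k < p) ('C(2 * k, k))%:R / (k%:R * 3%:R ^+ k) : rat)
    ((3%:R ^+ (p - 1) - 1) / p%:R).
Proof.
have pcharF := pchar_Fp hp; have p_neq3 : p != 3 by rewrite gtn_eqF.
have [p2 | oddp] := even_prime hp; first by rewrite p2 in hp3.
have ph : p = (p./2).*2.+1 by rewrite -[LHS]odd_double_half oddp.
have [e pX] := lucas_quot_sign (prime_gt3_coprime6 hp hp3) (ltnW (ltnW hp3)).
apply: (ratr_rat_congr pcharF).
- exact: central_sum_integral.
- exact: fermat_quot_integral ph pX.
apply: (mulIf (three_neq0_pchar hp p_neq3 pcharF)).
rewrite (ratr_fermat_quot hp p_neq3 ph pX pcharF) (ratr_lucas_quot pcharF p_neq3).
by rewrite mulNr opprK mulrC.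
Qed.
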